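(* Let $G_s$ be a social network, $q$ a query user, $d\ge 1$ an integer, $e$ a set of users (an index node), and $spiv_1,\dots,spiv_h$ social-network pivot users. Let $lb_k(e)=\min_{u\in e} dist_{SN}(u,spiv_k)$ and $ub_k(e)=\max_{u\in e} dist_{SN}(u,spiv_k)$. Define $lb\_dist_{SN}(S,e)=\max_{k=1}^{h} c_k$, where $c_k=lb_k(e)-dist_{SN}(q,spiv_k)$ if $dist_{SN}(q,spiv_k)<lb_k(e)$, $c_k=dist_{SN}(q,spiv_k)-ub_k(e)$ if $dist_{SN}(q,spiv_k)>ub_k(e)$, and $c_k=0$ otherwise. If $lb\_dist_{SN}(S,e)>d$, then for every spatial-social $(k',d,\sigma,\theta)$-truss $S$ containing $q$ (for any $k',\sigma,\theta$ and query topic vector) no user of $e$ belongs to $S$.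
   Context: $dist_{SN}(u,v)$ is the minimum number of hops between users $u$ and $v$ in the social network $G_s$ (treated as a connected graph with symmetric hop distance, so all these distances are finite). The support of an edge in a subgraph $H$ of $G_s$ is the number of triangles of $H$ containing it. A connected subgraph $S$ is a $(k',d)$-truss if every edge of $S$ has support in $S$ at least $k'-2$ and $dist_{SN}(u,v)<d$ for all $u,v\in V(S)$. Users have check-in locations on a road network with shortest-path distance $dist_{RN}$, and $avg\_dist_{RN}(u,v)=\frac{1}{|u.L||v.L|}\sum_i\sum_j dist_{RN}(u.loc_i,v.loc_j)$. Each edge $e_{a,b}$ carries topic probabilities $tp^j_{a,b}$; for a query topic vector $\mathcal{T}_q$ the influence of a path $a_1\to\dots\to a_m$ is $\prod_i\sum_j tp^j_{a_i,a_{i+1}}\mathcal{T}_q^j$. A spatial-social $(k',d,\sigma,\theta)$-truss is a user set $S$ that is a $(k',d)$-truss, satisfies $avg\_dist_{RN}(u,v)<\sigma$ for all $u,v\in S$, and such that for all $u,v\in S$ some path from $u$ to $v$ within $S$ has influence at least $\theta$. *)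

From HB Require Import structures.
From mathcomp Require Import all_boot all_order all_algebra.
Set Implicit Arguments. Unset Strict Implicit. Unset Printing Implicit Defensive.
Import Order.TTheory GRing.Theory Num.Theory.

Section SocialNetwork.
Variables (T : finType) (g : rel T).

Definition reach_in (u v : T) (n : nat) : bool :=
  [exists p : n.-tuple T, path g u p && (last u p == v)].

(* hop distance dist_SN(u,v): the least n such that a walk of n hops
   from u to v exists (a shortest walk in a connected graph has fewer than
   #|T| hops; value #|T| only if v is unreachable, excluded by connectivity) *)
Definition distSN (u v : T) : nat := find (reach_in u v) (iota 0 #|T|).

Definition inducedRel (S : {set T}) : rel T :=
  [rel x y | [&& g x y, x \in S & y \in S]].

Definition support (S : {set T}) (x y : T) : nat :=
  #|[set w in S | g x w && g y w]|.

Definition kd_truss (k' d : nat) (S : {set T}) : Prop :=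
  [/\ (forall u v, u \in S -> v \in S -> connect (inducedRel S) u v),
      (forall x y, x \in S -> y \in S -> g x y -> k' - 2 <= support S x y)
    & (forall u v, u \in S -> v \in S -> distSN u v < d)].

Variable R : realFieldType.
Local Open Scope ring_scope.

Definition avg_distRN (L : Type) (distRN : L -> L -> R) (loc : T -> seq L)
  (u v : T) : R :=
  (((size (loc u))%:R * (size (loc v))%:R)^-1) *
    \sum_(a <- loc u) \sum_(b <- loc v) distRN a b.

(* influence of the path u :: p (a_1 = u, a_2 .. a_m = p) *)
Definition influence (m : nat) (tp : T -> T -> 'I_m -> R) (Tq : 'I_m -> R)
  (u : T) (p : seq T) : R :=
  \prod_(xy <- zip (u :: p) p) \sum_(j < m) tp xy.1 xy.2 j * Tq j.

Definition ss_truss (L : Type) (distRN : L -> L -> R) (loc : T -> seq L)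
  (m : nat) (tp : T -> T -> 'I_m -> R) (Tq : 'I_m -> R)
  (k' d : nat) (sigma theta : R) (S : {set T}) : Prop :=
  [/\ kd_truss k' d S,
      (forall u v, u \in S -> v \in S -> avg_distRN distRN loc u v < sigma)
    & (forall u v, u \in S -> v \in S ->
        exists p : seq T, [/\ path (inducedRel S) u p, last u p = v
                            & theta <= influence tp Tq u p])].

End SocialNetwork.

Definition lbk (T : finType) (g : rel T) (E : {set T}) (p : T) : nat :=
  \big[minn/#|T|]_(u in E) distSN g u p.
Definition ubk (T : finType) (g : rel T) (E : {set T}) (p : T) : nat :=
  \max_(u in E) distSN g u p.

Definition lb_distSN (T : finType) (g : rel T) (q : T) (E : {set T})
  (h : nat) (spiv : 'I_h -> T) : nat :=
  \max_(k < h)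
    (let dq := distSN g q (spiv k) in
     let lb := lbk g E (spiv k) in
     let ub := ubk g E (spiv k) in
     if dq < lb then lb - dq else if ub < dq then dq - ub else 0).

(* Every user of a (k',d)-truss containing q is within d - 1 hops of q, in
   both directions.  By the triangle inequality for hop distance, such a user
   u lies at distance dist(q, p) +- (d - 1) from every pivot p, so the
   interval [lb_k(e), ub_k(e)] of any index node e containing u comes within
   d - 1 of dist(q, p), and each term of lb_dist_SN(S, e) is at most d - 1. *)
From mathcomp Require Import all_boot all_order all_algebra.
From mathcomp Require Import zify.

Set Implicit Arguments.
Unset Strict Implicit.
Unset Printing Implicit Defensive.
Import Order.TTheory.

Section HopDistance.
Variables (T : finType) (g : rel T).

Lemma distSN_le_reach u v n : reach_in g u v n -> (distSN g u v <= n)%N.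
Proof.
move=> reach_n; rewrite /distSN.
have [n_lt_T | T_le_n] := ltnP n #|T|; last first.
  by apply: leq_trans (find_size _ _) _; rewrite size_iota.
rewrite leqNgt; apply/negP => /(before_find 0).
by rewrite nth_iota // add0n reach_n.
Qed.

Lemma reach_in_cat u w v a b :
  reach_in g u w a -> reach_in g w v b -> reach_in g u v (a + b).
Proof.
move=> /existsP[p /andP[path_p /eqP last_p]] /existsP[r /andP[path_r /eqP last_r]].
apply/existsP; exists (cat_tuple p r).
by rewrite /= cat_path last_cat last_p path_p path_r last_r /=.
Qed.

Lemma reach_in_distSN u v : connect g u v -> reach_in g u v (distSN g u v).
Proof.
move=> /connectP[p path_p ->]; have [s path_s uniq_s _] := shortenP path_p.
have size_s : (size s < #|T|)%N.
  by rewrite -ltnS -[(size s).+1]/(size (u :: s)) -(card_uniqP uniq_s); exact: max_card.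
have reach_s : reach_in g u (last u s) (size s).
  by apply/existsP; exists (in_tuple s); rewrite /= path_s /=.
have has_reach : has (reach_in g u (last u s)) (iota 0 #|T|).
  by apply/hasP; exists (size s); rewrite ?mem_iota.
have := nth_find 0 has_reach.
by rewrite nth_iota ?add0n // -{2}(size_iota 0 #|T|) -has_find.
Qed.

Lemma distSN_triangle x w y : connect g x w -> connect g w y ->
  (distSN g x y <= distSN g x w + distSN g w y)%N.
Proof.
move=> /reach_in_distSN xw /reach_in_distSN wy; exact: distSN_le_reach (reach_in_cat xw wy).
Qed.

Lemma lbk_le_distSN (E : {set T}) p u : u \in E -> (lbk g E p <= distSN g u p)%N.
Proof. by move=> uE; have := bigmin_le_cond #|T| (distSN g ^~ p) uE; rewrite minEnat. Qed.

Lemma distSN_le_ubk (E : {set T}) p u : u \in E -> (distSN g u p <= ubk g E p)%N.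
Proof. exact: leq_bigmax_cond. Qed.

Lemma lb_distSN_le_distSN (gconn : forall u v, connect g u v) q (E : {set T})
    h (spiv : 'I_h -> T) u :
  u \in E -> (lb_distSN g q E spiv <= maxn (distSN g q u) (distSN g u q))%N.
Proof.
move=> uE; apply/bigmax_leqP => k _ /=; set p := spiv k.
have := lbk_le_distSN p uE; have := distSN_le_ubk p uE.
have := distSN_triangle (gconn u q) (gconn q p).
have := distSN_triangle (gconn q u) (gconn u p).
by case: ifP => _; [|case: ifP => _]; lia.
Qed.

End HopDistance.

Theorem lemma8 (T : finType) (g : rel T) (gsym : symmetric g)
  (gconn : forall u v : T, connect g u v)
  (q : T) (d : nat) (hd : (1 <= d)%N) (E : {set T})
  (h : nat) (spiv : 'I_h -> T) :
  (d < lb_distSN g q E spiv)%N ->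
  forall (R : realFieldType) (L : Type) (distRN : L -> L -> R)
         (loc : T -> seq L) (m : nat) (tp : T -> T -> 'I_m -> R)
         (Tq : 'I_m -> R) (k' : nat) (sigma theta : R) (S : {set T}),
    ss_truss g distRN loc tp Tq k' d sigma theta S -> q \in S ->
    forall u : T, u \in E -> u \notin S.
Proof.
move=> d_lt_lb R L distRN loc m tp Tq k' sigma theta S [[_ _ dist_lt_d] _ _] qS u uE.
apply: contraTN d_lt_lb => uS; rewrite -leqNgt.
apply: leq_trans (lb_distSN_le_distSN gconn q spiv uE) _.
by rewrite geq_max (ltnW (dist_lt_d _ _ qS uS)) (ltnW (dist_lt_d _ _ uS qS)).
Qed.
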